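(* In the Jolteon protocol described in the context, let $B$ be a globally direct-committed block. Then for every certified block $B'$ with $B'.r\ge B.r$, we have $B\longleftarrow^* B'$.
   Context: Jolteon protocol. There are $n=3f+1$ replicas, at most $f$ Byzantine, the rest honest; reliable authenticated channels; ideal threshold signatures in which $2f+1$ shares on the same message from distinct replicas combine into a threshold signature. A block is $B=(id,qc,tc,r,v,txn)$, with $qc$ a quorum certificate of its parent, $tc$ a timeout certificate or $\bot$, round $r$, view $v=0$, transactions $txn$, and $id$ a collision-resistant hash of the contents. A quorum certificate (QC) for $B$ is a threshold signature on $(B.id,B.r,B.v)$ from $2f+1$ shares (votes); $qc.r=B.r$; $B$ is certified if a QC for it exists; a genesis block of round $0$ has a QC. QCs are compared by round. Notation: $B_i\longleftarrow QC_i\longleftarrow B_{i+1}$ means $QC_i$ certifies $B_i$ and is contained in $B_{i+1}$; $B\longleftarrow^* B'$ ($B'$ extends $B$) means there is such a sequence (possibly of length zero) from $B$ to $B'$. A timeout message for round $r$ is a share on $r$ with the sender's $qc_{high}$; a timeout certificate (TC) for round $r$ is a threshold signature on $r$ from $2f+1$ timeout messages together with their $2f+1$ $qc_{high}$'s (all of round $<r$). Each round $r$ has a leader $L_r$ (round robin). Each replica keeps $r_{vote}=0$, $r_{cur}=1$, $qc_{high}$ = genesis QC. Propose: upon entering round $r$, $L_r$ multicasts $B=(id,qc_{high},tc,r,0,txn)$, with $tc$ the round-$(r-1)$ TC if $L_r$ entered round $r$ by receiving it, else $\bot$. Vote: upon the first valid proposal $B=(id,qc,tc,r,v,txn)$ from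 $L_r$, execute Advance Round, Lock, Commit; then if $r=r_{cur}$, $v=v_{cur}=0$, $r>r_{vote}$, and either $r=qc.r+1$ or ($r=tc.r+1$ and $qc.r\ge\max\{q.r: q$ a $qc_{high}$ in $tc\}$), send a share on $(id,r,v)$ to $L_{r+1}$ and set $r_{vote}\gets r$. Lock: upon seeing a valid QC $qc$ (formed from votes or contained in a proposal, timeout message or TC), set $qc_{high}\gets\max(qc_{high},qc)$. Commit: whenever there are two certified blocks $B,B'$ with $B'.qc$ certifying $B$ and $B'.r=B.r+1$, commit $B$ and all its ancestors. Advance Round: set $r_{cur}\gets\max(r_{cur},r)$ upon receiving or forming a round-$(r-1)$ QC or TC. Timer: upon entering round $r$, send the round-$(r-1)$ TC to $L_r$ if held and reset a timer; on expiry stop voting in round $r_{cur}$ and multicast a timeout message; upon a valid timeout message or TC execute Advance Round, Lock, Commit; upon $2f+1$ timeout messages form a TC. Definition: a block $B$ is globally direct-committed if $f+1$ honest replicas each successfully perform the Vote step on a proposal of a block $B'$ in round $B.r+1$ such that $B'.qc$ certifies $B$ (these Vote calls invoke Lock, setting $qc_{high}\gets B'.qc$, and produce $f+1$ matching votes). *)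

(* A relational (transition-system) model of the Jolteon
   protocol of the paper, with ideal threshold signatures and ideal hashing. *)
From Stdlib Require List.
From mathcomp Require Import all_boot.

Set Implicit Arguments.
Unset Strict Implicit.
Unset Printing Implicit Defensive.

(* The id of a block is a collision-resistant hash of its contents; we  *)
(* idealize it as the block itself.  A QC is a threshold signature on   *)
(* (B.id, B.r, B.v); since B.id determines B (and honest replicas only   *)
(* sign (B.id,B.r,B.v) for the actual B), the *data* of a QC is the     *)
(* block it certifies, and qc.r = B.r.  Whether the QC really exists is *)
(* a property of the execution (2f+1 shares), see [certified] below.    *)
(*   Blk qc tc r v txn  =  B = (id, qc, tc, r, v, txn)                  *)
(*   TCert r hs         =  TC for round r, hs = the 2f+1 timeout        *)
(*                         messages (signer id, sender's qc_high)       *)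
Inductive block : Type :=
| Genesis : block
| Blk : block -> option tcert -> nat -> nat -> seq nat -> block
with tcert : Type :=
| TCert : nat -> seq (nat * block) -> tcert.

Definition round (b : block) : nat :=
  match b with Genesis => 0 | Blk _ _ r _ _ => r end.

Definition tc_round (t : tcert) : nat := let: TCert r _ := t in r.
Definition tc_highs (t : tcert) : seq (nat * block) := let: TCert _ hs := t in hs.
Definition tc_maxqc (t : tcert) : nat := \max_(p <- tc_highs t) round p.2.

Inductive extends (B : block) : block -> Prop :=
| ext_refl : extends B B
| ext_step qc tc r v txn : extends B qc -> extends B (Blk qc tc r v txn).

(*   t_round : the last round in which the timer expired (the replica   *)
(*             stops voting in that round); 0 = never.                  *)
(*   seen r  : a valid proposal for round r from L_r was already handled *)
Record lstate := LState {
  r_vote : nat;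
  r_cur : nat;
  qc_high : block;
  t_round : nat;
  seen : nat -> Prop }.

Definition linit : lstate := LState 0 1 Genesis 0 (fun _ => False).

Definition lock (l : lstate) (q : block) : lstate :=
  if round (qc_high l) < round q
  then LState (r_vote l) (r_cur l) q (t_round l) (seen l) else l.

Definition advance (l : lstate) (k : nat) : lstate :=
  LState (r_vote l) (maxn (r_cur l) k) (qc_high l) (t_round l) (seen l).

Definition see_qc (l : lstate) (q : block) : lstate :=
  advance (lock l q) (round q).+1.

Definition see_tc (l : lstate) (t : tcert) : lstate :=
  advance (foldl (fun l p => see_qc l p.2) l (tc_highs t)) (tc_round t).+1.

Definition mark_seen (l : lstate) (r : nat) : lstate :=
  LState (r_vote l) (r_cur l) (qc_high l) (t_round l) (fun x => seen l x \/ x = r).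

Definition set_rvote (l : lstate) (r : nat) : lstate :=
  LState r (r_cur l) (qc_high l) (t_round l) (seen l).

Definition set_tround (l : lstate) (r : nat) : lstate :=
  LState (r_vote l) (r_cur l) (qc_high l) r (seen l).

Section Protocol.

Variable f : nat.
Notation n := (3 * f).+1.
Notation replica := 'I_n.
Variable byz : {set replica}.

Definition honest (i : replica) : Prop := i \notin byz.

Definition leader (r : nat) : replica := inord (r %% n).

(* Global state: local states and the pool of all signed messages sent. *)
Record gstate := GState {
  loc : replica -> lstate;
  vsh : replica -> block -> Prop;          (* vote share of i on (B.id,B.r,B.v) *)
  tsh : replica -> nat -> block -> Prop;   (* timeout message (round, qc_high) *)
  psh : replica -> block -> Prop }.        (* proposal multicast by i *)

Definition certified (s : gstate) (b : block) : Prop :=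
  b = Genesis \/
  exists Q : {set replica}, #|Q| = (2 * f).+1 /\ forall j, j \in Q -> vsh s j b.

Definition valid_tc (s : gstate) (t : tcert) : Prop :=
  size (tc_highs t) = (2 * f).+1 /\ uniq (map fst (tc_highs t)) /\
  forall j q, List.In (j, q) (tc_highs t) ->
    exists jo : replica, nat_of_ord jo = j /\ tsh s jo (tc_round t) q /\
      certified s q /\ round q < tc_round t.

Definition upd_loc (s : gstate) (i : replica) (l : lstate) : replica -> lstate :=
  fun j => if j == i then l else loc s j.

(* Proposals after an honest replica i moved from local state lo to ln:
   upon entering round r (= r_cur ln > r_cur lo), if i = L_r it multicasts
   (id, qc_high, tc, r, 0, txn), tc = the round-(r-1) TC by which it
   entered round r, if any. *)
Definition upd_psh (s : gstate) (i : replica) (lo ln : lstate)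
    (etc : option tcert) (txn : seq nat) : replica -> block -> Prop :=
  fun j b => psh s j b \/
    (j = i /\ r_cur lo < r_cur ln /\ leader (r_cur ln) = i /\
     b = Blk (qc_high ln) etc (r_cur ln) 0 txn).

Definition entered_by (ot : option tcert) (l : lstate) : option tcert :=
  match ot with
  | Some t => if (tc_round t).+1 == r_cur l then Some t else None
  | None => None
  end.

Definition handle_prop (l : lstate) (qc : block) (tc : option tcert) (r : nat)
  : lstate :=
  let l0 := see_qc l qc in
  let l1 := match tc with Some t => see_tc l0 t | None => l0 end in
  mark_seen l1 r.

Definition vote_ok (l : lstate) (qc : block) (tc : option tcert) (r v : nat)
  : Prop :=
  r = r_cur l /\ v = 0 /\ r_vote l < r /\ t_round l < r_cur l /\
  (r = (round qc).+1 \/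
   exists t, tc = Some t /\ r = (tc_round t).+1 /\ tc_maxqc t <= round qc).

Definition add_vote (s : gstate) (i : replica) (B : block) :=
  fun j b => vsh s j b \/ (j = i /\ b = B).

Inductive step (s : gstate) : gstate -> Prop :=
(* honest i sees a valid QC (formed from votes, or delivered in a message) *)
| st_see_qc i q txn :
    honest i -> certified s q ->
    let ln := see_qc (loc s i) q in
    step s (GState (upd_loc s i ln) (vsh s) (tsh s)
                   (upd_psh s i (loc s i) ln None txn))
(* honest i sees (receives or forms) a valid TC *)
| st_see_tc i t txn :
    honest i -> valid_tc s t ->
    let ln := see_tc (loc s i) t in
    step s (GState (upd_loc s i ln) (vsh s) (tsh s)
                   (upd_psh s i (loc s i) ln (entered_by (Some t) ln) txn))
| st_timeout i :
    honest i -> t_round (loc s i) < r_cur (loc s i) ->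
    let l := loc s i in
    step s (GState (upd_loc s i (set_tround l (r_cur l))) (vsh s)
                   (fun j r q => tsh s j r q \/
                                 (j = i /\ r = r_cur l /\ q = qc_high l))
                   (psh s))
| st_vote i qc tc r v tx txn :
    honest i -> psh s (leader r) (Blk qc tc r v tx) ->
    certified s qc ->
    (tc = None \/ exists t, tc = Some t /\ valid_tc s t) ->
    ~ seen (loc s i) r ->
    let l := handle_prop (loc s i) qc tc r in
    vote_ok l qc tc r v ->
    step s (GState (upd_loc s i (set_rvote l r))
                   (add_vote s i (Blk qc tc r v tx)) (tsh s)
                   (upd_psh s i (loc s i) l (entered_by tc l) txn))
| st_novote i qc tc r v tx txn :
    honest i -> psh s (leader r) (Blk qc tc r v tx) ->
    certified s qc ->
    (tc = None \/ exists t, tc = Some t /\ valid_tc s t) ->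
    ~ seen (loc s i) r ->
    let l := handle_prop (loc s i) qc tc r in
    ~ vote_ok l qc tc r v ->
    step s (GState (upd_loc s i l) (vsh s) (tsh s)
                   (upd_psh s i (loc s i) l (entered_by tc l) txn))
| st_byz_vote j b : j \in byz ->
    step s (GState (loc s) (add_vote s j b) (tsh s) (psh s))
| st_byz_timeout j r q : j \in byz ->
    step s (GState (loc s) (vsh s)
                   (fun j' r' q' => tsh s j' r' q' \/ (j' = j /\ r' = r /\ q' = q))
                   (psh s))
| st_byz_prop j b : j \in byz ->
    step s (GState (loc s) (vsh s) (tsh s)
                   (fun j' b' => psh s j' b' \/ (j' = j /\ b' = b))).

Definition init_state (txn0 : seq nat) : gstate :=
  GState (fun _ => linit) (fun _ _ => False) (fun _ _ _ => False)
         (fun j b => honest j /\ j = leader 1 /\ b = Blk Genesis None 1 0 txn0).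

Inductive reachable : gstate -> Prop :=
| reach_init txn0 : reachable (init_state txn0)
| reach_step s s' : reachable s -> step s s' -> reachable s'.

(* B is globally direct-committed (in state s): f+1 honest replicas have
   performed the Vote step on one block B' of round B.r+1 whose qc
   certifies B.  (Honest vote shares are only created by the Vote step.) *)
Definition globally_direct_committed (s : gstate) (B : block) : Prop :=
  exists tc v txn,
    let B' := Blk B tc (round B).+1 v txn in
    exists H : {set replica}, #|H| = f.+1 /\
      forall i, i \in H -> honest i /\ vsh s i B'.

End Protocol.

(* Honest replicas maintain three invariants: each of their votes obeys the
   voting rule and has a certified parent of smaller round, no newer than their
   qc_high; each of their timeout messages for round r carries a qc_high at
   least as recent as the parent of each of their votes of round <= r (voting
   locked on that parent before the timer of round r expired); and they vote at
   most once per round.  Two quorums of 2f+1 share an honest replica, so a round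
   certifies at most one block.  Let H be the f+1 honest replicas that voted for
   the child C of B in round B.r+1.  A certified block of round B.r is B, and one
   of round B.r+1 is C, since its quorum meets H.  A certified block of higher
   round has a parent of round >= B.r: either the parent is of the previous
   round, or the proposal carries a TC whose 2f+1 timeout messages include one
   from H, sent after voting for C, whose qc_high bounds the parent's round from
   below. *)

From Pilot Require Import Defs.
From mathcomp Require Import all_boot zify.

Set Implicit Arguments.
Unset Strict Implicit.
Unset Printing Implicit Defensive.

(* Junk value: [parent Genesis = Genesis]. *)
Definition parent (b : block) : block := if b is Blk qc _ _ _ _ then qc else Genesis.

Definition tcert_of (b : block) : option tcert :=
  if b is Blk _ tc _ _ _ then tc else None.

Lemma extends_parent B b :
  round (parent b) < round b -> extends B (parent b) -> extends B b.
Proof. by case: b => //= qc tc r v tx _; apply: ext_step. Qed.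

Definition lstate_le (l l' : lstate) : Prop :=
  r_vote l <= r_vote l' /\ r_cur l <= r_cur l' /\
  round (qc_high l) <= round (qc_high l') /\ t_round l <= t_round l'.

Lemma lstate_le_refl l : lstate_le l l.
Proof. by rewrite /lstate_le; lia. Qed.

Lemma lstate_le_trans l1 l2 l3 : lstate_le l1 l2 -> lstate_le l2 l3 -> lstate_le l1 l3.
Proof. by rewrite /lstate_le; lia. Qed.

Lemma set_rvote_le l r : r_vote l <= r -> lstate_le l (set_rvote l r).
Proof. by rewrite /lstate_le /=; lia. Qed.

Lemma set_tround_le l r : t_round l <= r -> lstate_le l (set_tround l r).
Proof. by rewrite /lstate_le /=; lia. Qed.

Lemma see_qc_le l q :
  let l' := see_qc l q in
  [/\ lstate_le l l', round q <= round (qc_high l') & round q < r_cur l'].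
Proof. by rewrite /see_qc /advance /Defs.lock /lstate_le; case: ifP => /=; split; lia. Qed.

Lemma see_tc_le l t : lstate_le l (see_tc l t).
Proof.
have fold_le : lstate_le l (foldl (fun l p => see_qc l p.2) l (tc_highs t)).
  elim: (tc_highs t) l => [|p hs IH] l /=; first exact: lstate_le_refl.
  by apply: lstate_le_trans (IH _); case: (see_qc_le l p.2).
by move: fold_le; rewrite /see_tc /advance /lstate_le /=; lia.
Qed.

Lemma handle_prop_le l qc tc r :
  let l' := handle_prop l qc tc r in
  [/\ lstate_le l l', round qc <= round (qc_high l') & round qc < r_cur l'].
Proof.
have [le0 locked0 cur0] := see_qc_le l qc.
have le1 : lstate_le (see_qc l qc)
    (if tc is Some t then see_tc (see_qc l qc) t else see_qc l qc).
  by case: tc => [t|]; [exact: see_tc_le | exact: lstate_le_refl].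
split; first exact: lstate_le_trans le0 le1.
- by case: le1 => [_ [_ [locked1 _]]]; apply: leq_trans locked1.
- by case: le1 => [_ [cur1 _]]; apply: leq_trans cur1.
Qed.

Section Invariant.

Variables (f : nat) (byz : {set 'I_(3 * f).+1}).
Implicit Types (s : gstate f) (l : lstate) (b : block).

Definition voting_rule s b : Prop :=
  round b = (round (parent b)).+1 \/
  exists t, [/\ tcert_of b = Some t, valid_tc s t, round b = (tc_round t).+1
              & tc_maxqc t <= round (parent b)].

Record sound_vote s l b : Prop := SoundVote {
  vote_round_le : round b <= r_vote l;
  vote_parent_locked : round (parent b) <= round (qc_high l);
  vote_parent_certified : certified s (parent b);
  vote_parent_round : round (parent b) < round b;
  vote_rule : voting_rule s b }.

Record replica_inv s i : Prop := ReplicaInv {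
  votes_sound : forall b, vsh s i b -> sound_vote s (loc s i) b;
  timeout_round_le : forall r q, tsh s i r q -> r <= t_round (loc s i);
  timeout_locked : forall r q b, tsh s i r q -> vsh s i b -> round b <= r ->
    round (parent b) <= round q;
  votes_unique : forall b1 b2, vsh s i b1 -> vsh s i b2 ->
    round b1 = round b2 -> b1 = b2 }.

Definition honest_inv s : Prop := forall i, honest byz i -> replica_inv s i.

Definition msgs_sub s s' : Prop :=
  (forall i b, vsh s i b -> vsh s' i b) /\
  (forall i r q, tsh s i r q -> tsh s' i r q).

Lemma certified_sub s s' b : msgs_sub s s' -> certified s b -> certified s' b.
Proof.
move=> [sub_v _] [->|[Q [card_Q votes_Q]]]; [by left | right].
by exists Q; split=> // j /votes_Q; apply: sub_v.
Qed.

Lemma valid_tc_sub s s' t : msgs_sub s s' -> valid_tc s t -> valid_tc s' t.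
Proof.
move=> sub [size_t [uniq_t signed]]; do 2!split=> //.
move=> j q /signed [jo [e_j [tsh_q [cert_q round_q]]]].
by exists jo; split=> //; split; [apply: sub.2 | split=> //; apply: certified_sub cert_q].
Qed.

Lemma sound_vote_mono s s' l l' b :
  msgs_sub s s' -> lstate_le l l' -> sound_vote s l b -> sound_vote s' l' b.
Proof.
move=> sub [rv [_ [locked _]]] [vr vl vc vp rule]; split=> //.
- exact: leq_trans rv.
- exact: leq_trans locked.
- exact: certified_sub vc.
case: rule => [|[t [tc_b valid_t round_b maxqc]]]; [by left | right].
by exists t; split=> //; apply: valid_tc_sub valid_t.
Qed.

Lemma replica_inv_frame s s' i :
  msgs_sub s s' -> lstate_le (loc s i) (loc s' i) ->
  (forall b, vsh s' i b -> vsh s i b) ->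
  (forall r q, tsh s' i r q -> tsh s i r q) ->
  replica_inv s i -> replica_inv s' i.
Proof.
move=> sub le old_v old_t [sound tround locked uniq]; split.
- by move=> b /old_v /sound; apply: sound_vote_mono.
- by move=> r q /old_t /tround; case: le => [_ [_ [_ tle]]] /leq_trans; apply.
- by move=> r q b /old_t tq /old_v; apply: locked.
- by move=> b1 b2 /old_v v1 /old_v; apply: uniq.
Qed.

Lemma replica_inv_timeout s s' i r q :
  msgs_sub s s' -> lstate_le (loc s i) (loc s' i) ->
  (forall b, vsh s' i b -> vsh s i b) ->
  (forall r' q', tsh s' i r' q' -> tsh s i r' q' \/ r' = r /\ q' = q) ->
  r <= t_round (loc s' i) -> round (qc_high (loc s i)) <= round q ->
  replica_inv s i -> replica_inv s' i.
Proof.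
move=> sub le old_v new_t r_le q_ge inv; split.
- by move=> b /old_v /(votes_sound inv); apply: sound_vote_mono.
- move=> r' q' /new_t [/(timeout_round_le inv)|[-> _]] //.
  by case: le => [_ [_ [_ tle]]] /leq_trans; apply.
- move=> r' q' b /new_t [tq /old_v|[_ -> /old_v vb _]]; first exact: timeout_locked.
  exact: leq_trans (vote_parent_locked (votes_sound inv vb)) q_ge.
- by move=> b1 b2 /old_v v1 /old_v; apply: votes_unique.
Qed.

Lemma replica_inv_vote s s' i b :
  msgs_sub s s' -> lstate_le (loc s i) (loc s' i) ->
  (forall b', vsh s' i b' -> vsh s i b' \/ b' = b) ->
  (forall r q, tsh s' i r q -> tsh s i r q) ->
  r_vote (loc s i) < round b -> t_round (loc s' i) < round b ->
  sound_vote s' (loc s' i) b ->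
  replica_inv s i -> replica_inv s' i.
Proof.
move=> sub le new_v old_t fresh_v fresh_t sound_b inv.
have old_round b' : vsh s i b' -> round b' < round b.
  by move=> /(votes_sound inv) /vote_round_le /leq_ltn_trans; apply.
case: le => [rv [rc [locked tle]]]; split.
- move=> b' /new_v [/(votes_sound inv)|->] // /(sound_vote_mono sub); apply.
  by rewrite /lstate_le; lia.
- by move=> r q /old_t /(timeout_round_le inv) /leq_trans; apply.
- move=> r q b' /old_t tq /new_v [vb'|->]; first exact: timeout_locked tq vb'.
  by have := timeout_round_le inv tq; lia.
- move=> b1 b2 /new_v [v1|->] /new_v [v2|->] //.
  + exact: (votes_unique inv) v1 v2.
  + by have := old_round _ v1; lia.
  + by have := old_round _ v2; lia.
Qed.

Lemma upd_loc_le s i l j :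
  lstate_le (loc s i) l -> lstate_le (loc s j) (upd_loc s i l j).
Proof. by rewrite /upd_loc; case: eqP => [->|_] //; exact: lstate_le_refl. Qed.

Lemma vote_ok_sound s s' l qc tc r v tx :
  msgs_sub s s' -> certified s qc ->
  (tc = None \/ exists t, tc = Some t /\ valid_tc s t) ->
  vote_ok (handle_prop l qc tc r) qc tc r v ->
  sound_vote s' (set_rvote (handle_prop l qc tc r) r) (Blk qc tc r v tx).
Proof.
move=> sub cert_qc valid_tc_tc; have [_ locked cur] := handle_prop_le l qc tc r.
case=> [r_cur_eq [_ [_ [_ rule]]]]; split=> //=.
- exact: certified_sub cert_qc.
- by rewrite r_cur_eq.
- case: rule => [|[t [tc_t [r_eq maxqc]]]]; [by left | right; exists t; subst tc].
  split=> //; case: valid_tc_tc => [//|[t' [[<-] valid_t']]].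
  exact: valid_tc_sub valid_t'.
Qed.

Lemma replica_inv_timeout_step s i j :
  replica_inv s j -> t_round (loc s i) < r_cur (loc s i) ->
  let l := loc s i in
  replica_inv (GState (upd_loc s i (set_tround l (r_cur l))) (vsh s)
    (fun j' r q => tsh s j' r q \/ j' = i /\ r = r_cur l /\ q = qc_high l) (psh s)) j.
Proof.
move=> inv_j t_lt /=; have le_i := set_tround_le (ltnW t_lt).
case: (eqVneq j i) => [e|ne]; first subst j.
- apply: (replica_inv_timeout (r := r_cur (loc s i)) (q := qc_high (loc s i))) inv_j => //=.
  + by split=> /= *; [|left].
  + exact: upd_loc_le.
  + by move=> r q [|[_ [-> ->]]]; [left | right].
  + by rewrite /upd_loc eqxx.
- apply: replica_inv_frame inv_j => //=.
  + by split=> /= *; [|left].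
  + exact: upd_loc_le.
  + by move=> r q [//|[e _]]; rewrite e eqxx in ne.
Qed.

Lemma replica_inv_vote_step s i j qc tc r v tx txn :
  replica_inv s j -> certified s qc ->
  (tc = None \/ exists t, tc = Some t /\ valid_tc s t) ->
  let l := handle_prop (loc s i) qc tc r in
  vote_ok l qc tc r v ->
  replica_inv (GState (upd_loc s i (set_rvote l r)) (add_vote s i (Blk qc tc r v tx))
    (tsh s) (upd_psh s i (loc s i) l (entered_by tc l) txn)) j.
Proof.
move=> inv_j cert_qc valid_tc_tc /= ok.
have [le_l _ _] := handle_prop_le (loc s i) qc tc r.
set l := handle_prop _ _ _ _ in ok le_l *.
have [r_eq [_ [rv_lt [t_lt _]]]] := ok.
have le_i := lstate_le_trans le_l (set_rvote_le (ltnW rv_lt)).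
have sub : msgs_sub s (GState (upd_loc s i (set_rvote l r))
    (add_vote s i (Blk qc tc r v tx)) (tsh s) (upd_psh s i (loc s i) l (entered_by tc l) txn)).
  by split=> /= *; [left|].
have sound := vote_ok_sound (l := loc s i) tx sub cert_qc valid_tc_tc ok.
case: (eqVneq j i) => [e|ne]; first subst j.
- apply: replica_inv_vote (sub) _ _ _ _ _ _ inv_j => //=; first exact: upd_loc_le.
  + by move=> b [|[_ ->]]; [left | right].
  + by case: le_l => [rv _]; apply: leq_ltn_trans rv rv_lt.
  + by rewrite /upd_loc eqxx; exact: leq_trans t_lt (eq_leq (esym r_eq)).
  + by rewrite /upd_loc eqxx.
- apply: replica_inv_frame sub _ _ _ inv_j => //=; first exact: upd_loc_le.
  by move=> b [//|[e _]]; rewrite e eqxx in ne.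
Qed.

Lemma honest_inv_step s s' : honest_inv s -> step byz s s' -> honest_inv s'.
Proof.
move=> inv st j hj; have inv_j := inv j hj.
have byz_ne j0 : j0 \in byz -> j = j0 -> False by move=> + e; rewrite -e (negbTE hj).
case: st.
- move=> i q txn _ _ /=; apply: replica_inv_frame inv_j => //.
  by apply: upd_loc_le; case: (see_qc_le (loc s i) q).
- move=> i t txn _ _ /=; apply: replica_inv_frame inv_j => //.
  exact/upd_loc_le/see_tc_le.
- by move=> i _ t_lt; exact: (replica_inv_timeout_step inv_j t_lt).
- move=> i qc tc r v tx txn _ _ cert_qc valid_tc_tc _.
  exact: (replica_inv_vote_step _ _ inv_j cert_qc valid_tc_tc).
- move=> i qc tc r v tx txn _ _ _ _ _ /= _; apply: replica_inv_frame inv_j => //.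
  by apply: upd_loc_le; case: (handle_prop_le (loc s i) qc tc r).
- move=> j0 b byz_j0; apply: replica_inv_frame inv_j => //=.
  + by split=> /= *; [left|].
  + by move=> b' [//|[/byz_ne]].
- move=> j0 r q byz_j0; apply: replica_inv_frame inv_j => //=.
  + by split=> /= *; [|left].
  + by move=> r' q' [//|[/byz_ne]].
- by move=> j0 b _; apply: replica_inv_frame inv_j.
Qed.

Lemma honest_inv_reachable s : reachable byz s -> honest_inv s.
Proof.
elim=> [txn0 i _|s1 s2 _ inv st]; first by split.
exact: honest_inv_step inv st.
Qed.

End Invariant.

Lemma meet_of_card_gt (T : finType) (A C : {set T}) :
  #|T| < #|A| + #|C| -> exists2 x, x \in A & x \in C.
Proof.
move=> card_gt; have : 0 < #|A :&: C|.
  by have := cardsUI A C; have := max_card (A :|: C); lia.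
by case/card_gt0P => x; rewrite inE => /andP[]; exists x.
Qed.

Section Safety.

Variables (f : nat) (byz : {set 'I_(3 * f).+1}) (s : gstate f).
Hypotheses (few_byz : #|byz| <= f) (reach : reachable byz s).
Implicit Types (Q H : {set 'I_(3 * f).+1}) (b : block).

Lemma quorum_meets Q H :
  (2 * f).+1 <= #|Q| -> f.+1 <= #|H| -> exists2 x, x \in Q & x \in H.
Proof. by move=> card_Q card_H; apply: meet_of_card_gt; rewrite card_ord; lia. Qed.

Lemma quorums_meet_honest Q1 Q2 :
  #|Q1| = (2 * f).+1 -> #|Q2| = (2 * f).+1 ->
  exists x, [/\ x \in Q1, x \in Q2 & honest byz x].
Proof.
move=> card_Q1 card_Q2.
have card_D : f.+1 <= #|Q2 :\: byz|.
  by rewrite cardsD; have := subset_leq_card (subsetIr Q2 byz); lia.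
have [x x_Q1] := quorum_meets (eq_leq (esym card_Q1)) card_D.
by rewrite inE => /andP[x_byz x_Q2]; exists x.
Qed.

Lemma in_map_fst (hs : seq (nat * block)) j :
  j \in map fst hs -> exists q, List.In (j, q) hs.
Proof.
elim: hs => [|[j' q] hs IH] //=; rewrite in_cons => /orP[/eqP ->|/IH[q' in_q']].
  by exists q; left.
by exists q'; right.
Qed.

Lemma round_le_maxqc (hs : seq (nat * block)) j q :
  List.In (j, q) hs -> round q <= \max_(p <- hs) round p.2.
Proof.
elim: hs => [|p hs IH] //= [->|/IH le_q]; rewrite big_cons; first exact: leq_maxl.
exact: leq_trans le_q (leq_maxr _ _).
Qed.

Lemma valid_tc_meets t H :
  valid_tc s t -> f.+1 <= #|H| ->
  exists z q, [/\ z \in H, tsh s z (tc_round t) q & round q <= tc_maxqc t].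
Proof.
move=> [size_t [uniq_t signed]] card_H.
pose S := [set jo : 'I_(3 * f).+1 | val jo \in map fst (tc_highs t)].
have card_S : (2 * f).+1 <= #|S|.
  rewrite -size_t -(size_map fst) cardE -(size_map val (enum S)).
  apply: (uniq_leq_size uniq_t) => j j_in.
  have [q /signed[jo [e_jo _]]] := in_map_fst j_in.
  by rewrite -e_jo in j_in *; apply: map_f; rewrite mem_enum inE.
have [z] := quorum_meets card_S card_H.
rewrite inE => /in_map_fst[q in_q] z_H.
have [jo [/val_inj e_jo [tsh_q _]]] := signed _ _ in_q; subst jo.
by exists z, q; split=> //; apply: round_le_maxqc in_q.
Qed.

Let inv := honest_inv_reachable reach.

Lemma certified_honest_voter b :
  certified s b -> b = Genesis \/ exists2 i, honest byz i & vsh s i b.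
Proof.
case=> [|[Q [card_Q votes_Q]]]; [by left | right].
by have [x [x_Q _ hx]] := quorums_meet_honest card_Q card_Q; exists x => //; apply: votes_Q.
Qed.

Lemma certified_round0 b : certified s b -> round b = 0 -> b = Genesis.
Proof.
case/certified_honest_voter => [//|[i hi /(votes_sound (inv hi))/vote_parent_round]].
by move=> pos e; rewrite e in pos.
Qed.

Lemma certified_round_inj b1 b2 :
  certified s b1 -> certified s b2 -> round b1 = round b2 -> b1 = b2.
Proof.
move=> c1 c2 e.
case: (c1) => [e1|[Q1 [card_Q1 votes_Q1]]].
  by rewrite e1 (certified_round0 c2) // -e e1.
case: (c2) => [e2|[Q2 [card_Q2 votes_Q2]]].
  by rewrite e2 (certified_round0 c1) // e e2.
have [x [x_Q1 x_Q2 hx]] := quorums_meet_honest card_Q1 card_Q2.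
exact: (votes_unique (inv hx)) (votes_Q1 x x_Q1) (votes_Q2 x x_Q2) e.
Qed.

Section Committed.

Variables (B : block) (tc0 : option tcert) (v0 : nat) (txn0 : seq nat).
Variable H : {set 'I_(3 * f).+1}.
Hypothesis card_H : #|H| = f.+1.
Hypothesis H_votes :
  forall i, i \in H -> honest byz i /\ vsh s i (Blk B tc0 (round B).+1 v0 txn0).

Lemma committed_certified : certified s B.
Proof.
have [i i_H] : exists i, i \in H by apply/card_gt0P; rewrite card_H.
have [hi vi] := H_votes i_H.
exact: vote_parent_certified (votes_sound (inv hi) vi).
Qed.

Lemma certified_next_round b :
  certified s b -> round b = (round B).+1 -> b = Blk B tc0 (round B).+1 v0 txn0.
Proof.
case=> [-> //|[Q [card_Q votes_Q]] e].
have [x x_Q x_H] := quorum_meets (eq_leq (esym card_Q)) (eq_leq (esym card_H)).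
have [hx vx] := H_votes x_H.
exact: (votes_unique (inv hx)) (votes_Q x x_Q) vx e.
Qed.

Lemma vote_parent_round_ge i b :
  honest byz i -> vsh s i b -> (round B).+1 < round b -> round B <= round (parent b).
Proof.
move=> hi vb lt_b; case: (vote_rule (votes_sound (inv hi) vb)) => [e|[t [_ valid_t e maxqc]]].
  by move: lt_b; rewrite e; lia.
have [z [q [z_H tsh_q le_maxqc]]] := valid_tc_meets valid_t (eq_leq (esym card_H)).
have [hz vz] := H_votes z_H.
apply: leq_trans (leq_trans le_maxqc maxqc).
by apply: (timeout_locked (inv hz) tsh_q vz) => /=; lia.
Qed.

Lemma committed_extends b : certified s b -> round B <= round b -> extends B b.
Proof.
have [k] := ubnP (round b); elim: k b => // k IH b /ltnSE le_k cb le_b.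
case: (ltngtP (round b) (round B).+1) => [lt_b|gt_b|eq_b].
- have -> : b = B by apply: certified_round_inj cb committed_certified _; lia.
  exact: ext_refl.
- case/certified_honest_voter: cb gt_b => [-> //|[i hi vb] gt_b].
  have sound_b := votes_sound (inv hi) vb.
  apply: extends_parent (vote_parent_round sound_b) _.
  apply: IH (vote_parent_certified sound_b) (vote_parent_round_ge hi vb gt_b).
  exact: leq_trans (vote_parent_round sound_b) le_k.
- by rewrite (certified_next_round cb eq_b); apply/ext_step/ext_refl.
Qed.

End Committed.

End Safety.

Theorem lemma3 (f : nat) (byz : {set 'I_(3 * f).+1}) (s : gstate f) :
  #|byz| <= f ->
  reachable byz s ->
  forall B : block, globally_direct_committed byz s B ->
  forall B' : block, certified s B' -> round B <= round B' ->
  extends B B'.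
Proof.
move=> few_byz reach B [tc0 [v0 [txn0 [H [card_H H_votes]]]]].
exact: (committed_extends few_byz reach card_H H_votes).
Qed.
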